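(* Let $\mathbf{G}=\begin{bmatrix}\mathbf{G}_1\\ \mathbf{G}_0\end{bmatrix}\in\mathbb{F}_2^{m\times n}$ be a triorthogonal matrix with linearly independent rows ($\mathbf{G}_1\in\mathbb{F}_2^{k\times n}$ the odd-weight rows, $\mathbf{G}_0$ the even-weight rows), and let $\mathcal{Q}^T=\mathrm{CSS}(\mathcal{C}_1,\mathcal{C}_2)$ be the associated triorthogonal $[[n,k,d]]$ code, with $\mathcal{C}_1$ generated by $\mathbf{G}$ and $\mathcal{C}_2$ the dual of the code generated by $\mathbf{G}_0$; assume $\mathcal{Q}^T$ is T-triorthogonal. Let $\mathcal{C}\subseteq\mathbb{F}_2^n$ be a binary linear code with $\mathcal{C}_1\subset\mathcal{C}\subset\mathcal{C}_2$ such that $\mathcal{Q}^{\rm Sym}=\mathrm{CSS}(\mathcal{C},\mathcal{C})$ is a symmetric $[[n,k,d']]$ CSS code. Then $\mathcal{Q}^T$ and $\mathcal{Q}^{\rm Sym}$ form a CNOT-transversal code pair (with $\mathcal{Q}^T$ as control and $\mathcal{Q}^{\rm Sym}$ as target), and $d'\ge d$.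
   Context: A binary matrix $\mathbf{G}=[G_{ij}]$ is triorthogonal if $\sum_i G_{ai}G_{bi}=0\pmod 2$ for all rows $a\ne b$ and $\sum_i G_{ai}G_{bi}G_{ci}=0\pmod 2$ for all distinct rows $a,b,c$. For binary linear codes $\mathcal{C}_a,\mathcal{C}_b\subseteq\mathbb{F}_2^n$ with $\mathcal{C}_b^\perp\subset\mathcal{C}_a$, $\mathrm{CSS}(\mathcal{C}_a,\mathcal{C}_b)$ is spanned by $|\bm{\psi}\rangle_L=|\mathcal{C}_b^\perp|^{-1/2}\sum_{\mathbf{y}\in\mathcal{C}_b^\perp}|\bm{\psi}\mathbf{A}+\mathbf{y}\rangle$, $\bm{\psi}\in\mathbb{F}_2^k$, where $\mathbf{A}\in\mathbb{F}_2^{k\times n}$ (a mapping matrix) has rows forming representatives of a basis of $\mathcal{C}_a/\mathcal{C}_b^\perp$; its number of logical qubits is $k=\dim\mathcal{C}_a+\dim\mathcal{C}_b-n$ and its distance is $\min(d_a',d_b')$ where $d_a'$ is the minimum Hamming weight of vectors in $\mathcal{C}_a\setminus\mathcal{C}_b^\perp$ and $d_b'$ that of vectors in $\mathcal{C}_b\setminus\mathcal{C}_a^\perp$. A CSS code is symmetric if $\mathcal{C}_a=\mathcal{C}_b$ (so $\mathcal{C}^\perp\subseteq\mathcal{C}$). The triorthogonal code uses mapping matrix $\mathbf{G}_1$. It is called T-triorthogonal if it is Pauli $X$-transversal (applying $\mathbf{X}$ to every physical qubit implements logical $\mathbf{X}$ on every logical qubit); such codes are also transversal for the gate $\mathbf{T}=\mathrm{diag}(1,e^{i\pi/4})$.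 Two codes $\mathcal{Q}_1,\mathcal{Q}_2$ of length $n$ with $k$ logical qubits form a CNOT-transversal pair (control $\mathcal{Q}_1$, target $\mathcal{Q}_2$) if, for suitable mapping matrices defining their logical bases, applying a physical CNOT from qubit $i$ of the $\mathcal{Q}_1$ block to qubit $i$ of the $\mathcal{Q}_2$ block for every $i=1,\dots,n$ maps $|\bm{\psi}\rangle_L\otimes|\bm{\phi}\rangle_L\mapsto|\bm{\psi}\rangle_L\otimes|\bm{\psi}+\bm{\phi}\rangle_L$ for all $\bm{\psi},\bm{\phi}\in\mathbb{F}_2^k$, i.e., implements logical CNOT between corresponding logical qubits. *)

(* Binary codes are row spaces of matrices over 'F_2;
   quantum states are amplitude functions on computational basis vectors,
   with amplitudes in algC (algebraic complex numbers). *)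
From HB Require Import structures.
From mathcomp Require Import all_boot all_order all_algebra all_field.
Set Implicit Arguments. Unset Strict Implicit. Unset Printing Implicit Defensive.
Import GRing.Theory Num.Theory.
Local Open Scope ring_scope.

Notation F2 := 'F_2.

Definition wt n (v : 'rV[F2]_n) : nat := #|[set i : 'I_n | v 0 i != 0]|.

Definition triorthogonal m n (G : 'M[F2]_(m, n)) : Prop :=
  (forall a b : 'I_m, a != b -> \sum_(i < n) G a i * G b i = 0) /\
  (forall a b c : 'I_m, a != b -> b != c -> a != c ->
      \sum_(i < n) G a i * G b i * G c i = 0).

Definition dualmx r n (C : 'M[F2]_(r, n)) : 'M[F2]_n := kermx C^T.

Definition code_card r n (C : 'M[F2]_(r, n)) : nat :=
  #|[set y : 'rV[F2]_n | (y <= C)%MS]|.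

(* A is a mapping matrix for CSS(Ca, Cb): its rows are representatives of a
   basis of Ca / Cb^perp *)
Definition is_mapping ra rb n k (Ca : 'M[F2]_(ra, n)) (Cb : 'M[F2]_(rb, n))
    (A : 'M[F2]_(k, n)) : Prop :=
  (A <= Ca)%MS /\ (Ca <= A + dualmx Cb)%MS /\
  (forall psi : 'rV[F2]_k, (psi *m A <= dualmx Cb)%MS -> psi = 0).

Definition qstate n := 'rV[F2]_n -> algC.
Definition qstate2 n := 'rV[F2]_n -> 'rV[F2]_n -> algC.

Definition tensor n (s t : qstate n) : qstate2 n := fun x y => s x * t y.

(* logical basis state |psi>_L of CSS(Ca, Cb) with mapping matrix A:
   |C_b^perp|^{-1/2} sum_{y in C_b^perp} |psi A + y> *)
Definition logical_state rb n k (Cb : 'M[F2]_(rb, n)) (A : 'M[F2]_(k, n))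
    (psi : 'rV[F2]_k) : qstate n :=
  fun x => if (x - psi *m A <= dualmx Cb)%MS
           then (sqrtC (code_card (dualmx Cb))%:R)^-1 else 0.

(* physical X on every qubit: |x> |-> |x + 1> *)
Definition transX n (s : qstate n) : qstate n := fun x => s (x - const_mx 1).

(* physical CNOT from qubit i of block 1 to qubit i of block 2, for all i:
   |x>|z> |-> |x>|x + z> *)
Definition transCNOT n (S : qstate2 n) : qstate2 n := fun x y => S x (y - x).

Definition X_transversal rb n k (Cb : 'M[F2]_(rb, n)) (A : 'M[F2]_(k, n)) : Prop :=
  forall psi : 'rV[F2]_k,
    transX (logical_state Cb A psi) = logical_state Cb A (psi + const_mx 1).

Definition CNOT_transversal r1 r2 n k (Cb1 : 'M[F2]_(r1, n)) (A1 : 'M[F2]_(k, n))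
    (Cb2 : 'M[F2]_(r2, n)) (A2 : 'M[F2]_(k, n)) : Prop :=
  forall psi phi : 'rV[F2]_k,
    transCNOT (tensor (logical_state Cb1 A1 psi) (logical_state Cb2 A2 phi)) =
    tensor (logical_state Cb1 A1 psi) (logical_state Cb2 A2 (psi + phi)).

Definition css_cand ra rb n (Ca : 'M[F2]_(ra, n)) (Cb : 'M[F2]_(rb, n))
    (v : 'rV[F2]_n) : bool :=
  ((v <= Ca)%MS && ~~ (v <= dualmx Cb)%MS) ||
  ((v <= Cb)%MS && ~~ (v <= dualmx Ca)%MS).

Definition is_css_distance ra rb n (Ca : 'M[F2]_(ra, n)) (Cb : 'M[F2]_(rb, n))
    (d : nat) : Prop :=
  (exists2 v, css_cand Ca Cb v & wt v = d) /\
  (forall v, css_cand Ca Cb v -> (d <= wt v)%N).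

From HB Require Import structures.
From mathcomp Require Import all_boot all_order all_algebra all_field.
From mathcomp Require Import zify.
From Stdlib Require Import FunctionalExtensionality.
Set Implicit Arguments. Unset Strict Implicit. Unset Printing Implicit Defensive.
Import GRing.Theory Num.Theory.
Local Open Scope ring_scope.

(* Over F_2 a vector is orthogonal to itself iff its weight is even, so the
   odd rows G1 of a triorthogonal matrix satisfy G1 G1^T = I.  Hence the row
   space of G1 meets C^perp trivially, and counting dimensions gives
   C = <G1> + C^perp: G1 is also a mapping matrix for CSS(C, C).  With this
   shared logical basis, the physical CNOT adds to the target the control
   string x, which differs from psi G1 by an element of C2^perp <= C^perp and
   so only shifts the target within its coset.  Finally a vector of C \ C^perp has a nonzero G1-component, so it
   lies in C2 \ C1^perp and its weight is at least d. *)

Lemma F2_natr_neq0 (x : F2) : x = (x != 0)%:R.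
Proof.
case: x => [[|[|m]] lt_m2]; [exact/val_inj|exact/val_inj|].
by move: lt_m2; rewrite pdiv_id.
Qed.

Lemma F2_mulxx (x : F2) : x * x = x.
Proof. by rewrite [x]F2_natr_neq0; case: (x != 0); rewrite ?mul1r ?mul0r. Qed.

Lemma F2_natr_odd (m : nat) : m%:R = (odd m)%:R :> F2.
Proof. by rewrite -modn2 Fp_nat_mod. Qed.

Lemma F2_dot_self n (v : 'rV[F2]_n) :
  \sum_(i < n) v 0 i * v 0 i = (odd (wt v))%:R.
Proof.
rewrite (eq_bigr (fun i => if v 0 i != 0 then 1 else 0)); last first.
  by move=> i _; rewrite F2_mulxx {1}[v 0 i]F2_natr_neq0; case: ifP.
rewrite -big_mkcond sumr_const -F2_natr_odd /wt.
by congr _%:R; apply: eq_card => i; rewrite inE.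
Qed.

Lemma F2_gram_eq1 k n (A : 'M[F2]_(k, n)) :
  (forall a b : 'I_k, a != b -> \sum_(i < n) A a i * A b i = 0) ->
  (forall a : 'I_k, odd (wt (row a A))) ->
  A *m A^T = 1%:M.
Proof.
move=> orthA oddA; apply/matrixP => a b; rewrite !mxE.
under eq_bigr do rewrite mxE.
have [<-|neq_ab] := eqVneq a b; last exact: orthA.
have := F2_dot_self (row a A); rewrite oddA => <-.
by apply: eq_bigr => i _; rewrite !mxE.
Qed.

Lemma triorthogonal_gram k m n (G1 : 'M[F2]_(k, n)) (G0 : 'M[F2]_(m, n)) :
  triorthogonal (col_mx G1 G0) ->
  (forall a : 'I_k, odd (wt (row a G1))) ->
  G1 *m G1^T = 1%:M.
Proof.
move=> [orthG _]; apply: F2_gram_eq1 => a b neq_ab.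
have := orthG (lshift m a) (lshift m b).
rewrite (inj_eq (@lshift_inj _ _)) => /(_ neq_ab); apply: etrans.
by apply: eq_bigr => i _; rewrite !col_mxEu.
Qed.

Lemma dualmxS r1 r2 n (A : 'M[F2]_(r1, n)) (B : 'M[F2]_(r2, n)) :
  (A <= B)%MS -> (dualmx B <= dualmx A)%MS.
Proof.
move=> /submxP [X ->]; rewrite /dualmx sub_kermx trmx_mul mulmxA.
by rewrite mulmx_ker mul0mx.
Qed.

Lemma sub_dualmx_col_mx r1 r2 p n (A : 'M[F2]_(r1, n)) (B : 'M[F2]_(r2, n))
    (v : 'M[F2]_(p, n)) :
  (v <= dualmx (col_mx A B))%MS = (v <= dualmx A)%MS && (v <= dualmx B)%MS.
Proof.
rewrite /dualmx !sub_kermx tr_col_mx mul_mx_row -row_mx0.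
by apply/eqP/andP => [/eq_row_mx [-> ->]|[/eqP -> /eqP ->]].
Qed.

Lemma addmx_subr (F : fieldType) m n (S : 'M[F]_(m, n)) (u w : 'rV[F]_n) :
  (w <= S)%MS -> ((u + w)%R <= S)%MS = (u <= S)%MS.
Proof.
move=> wS; apply/idP/idP => [uwS|uS]; last exact: addmx_sub uS wS.
by rewrite -(addrK w u) (addmx_sub uwS) // eqmx_opp.
Qed.

Lemma dualmx_shift r1 r2 n k (Cb1 : 'M[F2]_(r1, n)) (Cb2 : 'M[F2]_(r2, n))
    (A : 'M[F2]_(k, n)) (psi phi : 'rV[F2]_k) (x y : 'rV[F2]_n) :
  (dualmx Cb1 <= dualmx Cb2)%MS -> (x - psi *m A <= dualmx Cb1)%MS ->
  (y - x - phi *m A <= dualmx Cb2)%MS = (y - (psi + phi) *m A <= dualmx Cb2)%MS.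
Proof.
move=> dual12 /submx_trans /(_ dual12) x_psi.
have -> : y - (psi + phi) *m A = (y - x - phi *m A) + (x - psi *m A).
  by rewrite mulmxDl addrACA subrK opprD [- _ - _]addrC.
exact: esym (addmx_subr _ x_psi).
Qed.

Lemma mulr_if_congr (R : pzSemiRingType) (c1 c2 : R) (b1 b2 b3 : bool) :
  (b1 -> b2 = b3) ->
  (if b1 then c1 else 0) * (if b2 then c2 else 0) =
  (if b1 then c1 else 0) * (if b3 then c2 else 0).
Proof. by case: b1 => [->|_]; rewrite ?mul0r. Qed.

Lemma CNOT_transversal_shared r1 r2 n k (Cb1 : 'M[F2]_(r1, n))
    (Cb2 : 'M[F2]_(r2, n)) (A : 'M[F2]_(k, n)) :
  (dualmx Cb1 <= dualmx Cb2)%MS -> CNOT_transversal Cb1 A Cb2 A.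
Proof.
move=> dual12 psi phi; apply: functional_extensionality => x.
apply: functional_extensionality => y.
rewrite /transCNOT /tensor /logical_state.
apply: mulr_if_congr => x_psi.
exact: dualmx_shift dual12 x_psi.
Qed.

Lemma css_distance_le ra rb ra' rb' n (Ca : 'M[F2]_(ra, n)) (Cb : 'M[F2]_(rb, n))
    (Ca' : 'M[F2]_(ra', n)) (Cb' : 'M[F2]_(rb', n)) (d d' : nat) :
  is_css_distance Ca Cb d -> is_css_distance Ca' Cb' d' ->
  (forall v, css_cand Ca' Cb' v -> css_cand Ca Cb v) ->
  (d <= d')%N.
Proof. by move=> [_ min_d] [[v cand_v <-] _] sub_cand; exact/min_d/sub_cand. Qed.

Section SharedMapping.

Variables (r n k : nat) (A : 'M[F2]_(k, n)) (C : 'M[F2]_(r, n)).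
Hypothesis sub_AC : (A <= C)%MS.
Hypothesis gramA : A *m A^T = 1%:M.

Lemma dualmx_mul_tr0 p (w : 'M[F2]_(p, n)) :
  (w <= dualmx C)%MS -> w *m A^T = 0.
Proof. by move=> /submx_trans /(_ (dualmxS sub_AC)); rewrite sub_kermx => /eqP. Qed.

Lemma mapping_free (psi : 'rV[F2]_k) : (psi *m A <= dualmx C)%MS -> psi = 0.
Proof. by move=> /dualmx_mul_tr0; rewrite -mulmxA gramA mulmx1. Qed.

Lemma orth_mapping_sub_dualmx (v : 'rV[F2]_n) :
  (v <= A + dualmx C)%MS -> v *m A^T = 0 -> (v <= dualmx C)%MS.
Proof.
case/sub_addsmxP => [[psi w] /= ->].
rewrite mulmxDl -mulmxA gramA mulmx1 dualmx_mul_tr0 ?submxMl // addr0 => ->.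
by rewrite mul0mx add0r submxMl.
Qed.

Hypothesis self_orth : (dualmx C <= C)%MS.
Hypothesis rankC : (\rank C + \rank C)%N = (n + k)%N.

Lemma sub_mapping_addsmx_dual : (C <= A + dualmx C)%MS.
Proof.
have rankA : \rank A = k by apply/eqP/row_freeP; exists A^T.
have capA0 : (A :&: dualmx C)%MS = 0.
  apply/eqP/rowV0P => v; rewrite sub_capmx => /andP [/submxP [psi ->]].
  by move/mapping_free ->; rewrite mul0mx.
have rank_sum : \rank (A + dualmx C) = \rank C.
  have := mxrank_sum_cap A (dualmx C).
  rewrite capA0 mxrank0 rankA mxrank_ker mxrank_tr addn0 => ->.
  by have := rank_leq_col C; lia.
have sub_sum : (A + dualmx C <= C)%MS by rewrite addsmx_sub sub_AC self_orth.
by rewrite -(mxrank_leqif_sup sub_sum).2 rank_sum.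
Qed.

Lemma is_mapping_sym : is_mapping C C A.
Proof. by split; [|split; [exact: sub_mapping_addsmx_dual|exact: mapping_free]]. Qed.

Lemma css_cand_sym_sub m (B : 'M[F2]_(m, n)) (v : 'rV[F2]_n) :
  (C <= dualmx B)%MS ->
  css_cand C C v -> css_cand (col_mx A B) (dualmx B) v.
Proof.
rewrite /css_cand orbb => CB /andP [vC v_notdual]; apply/orP; right.
rewrite (submx_trans vC CB) sub_dualmx_col_mx /=; apply: contra v_notdual.
move=> /andP [/sub_kermxP vA _]; apply: orth_mapping_sub_dualmx vA.
exact: submx_trans vC sub_mapping_addsmx_dual.
Qed.

End SharedMapping.

Theorem lemma1 (n k m0 : nat) (G1 : 'M['F_2]_(k, n)) (G0 : 'M['F_2]_(m0, n))
    (C : 'M['F_2]_n) (d d' : nat) :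
  triorthogonal (col_mx G1 G0) ->
  row_free (col_mx G1 G0) ->
  (forall i : 'I_k, odd (wt (row i G1))) ->
  (forall i : 'I_m0, ~~ odd (wt (row i G0))) ->
  (* Q^T = CSS(C1, C2), C1 = rowspace G, C2 = dual of rowspace G0,
     with mapping matrix G1, is T-triorthogonal *)
  X_transversal (dualmx G0) G1 ->
  (* C1 <= C <= C2 and CSS(C, C) is a symmetric CSS code with k logical qubits *)
  (col_mx G1 G0 <= C)%MS ->
  (C <= dualmx G0)%MS ->
  (dualmx C <= C)%MS ->
  (\rank C + \rank C)%N = (n + k)%N ->
  is_css_distance (col_mx G1 G0) (dualmx G0) d ->
  is_css_distance C C d' ->
  (exists A2 : 'M['F_2]_(k, n),
     is_mapping C C A2 /\ CNOT_transversal (dualmx G0) G1 C A2) /\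
  (d <= d')%N.
Proof.
move=> triG _ oddG1 _ _ GC CG0 self_orth rankC dist dist'.
have gramG1 := triorthogonal_gram triG oddG1.
have G1C : (G1 <= C)%MS by move: GC; rewrite col_mx_sub => /andP [].
split.
  exists G1; split; first exact: is_mapping_sym.
  by apply: CNOT_transversal_shared; apply: dualmxS.
apply: css_distance_le dist dist' _ => v.
exact: css_cand_sym_sub.
Qed.
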